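(* Let $C=(C_{i,j})$ be an $m\times n$ evolutionary stable (ES) configuration with $m,n>2$. Then $n$ is divisible by $3$, $C_{m,j}=1$ for all $1\le j\le n$, and row $m-1$ is the string $101\,101\cdots101$, i.e.\ $C_{m-1,j}=0$ if $j\equiv 2\pmod 3$ and $C_{m-1,j}=1$ otherwise.
   Context: An $m\times n$ configuration is a $0$-$1$ matrix $C=(C_{i,j})$, $1\le i\le m$, $1\le j\le n$; $C_{i,j}=1$ means lot $(i,j)$ is occupied by a house. Row $1$ is the northernmost, row $m$ the southernmost; column $1$ westernmost, column $n$ easternmost. A house at $(i,j)$ is blocked from sunlight if the three lots $(i,j-1)$, $(i,j+1)$, $(i+1,j)$ all lie inside the grid and are all occupied (lots outside the grid never obstruct sunlight). $C$ is permissible if no house is blocked, and maximal if it is permissible and setting any single empty lot to $1$ yields a non-permissible configuration. A maximal configuration is resistant to predators if, for every empty lot, putting a house on it results in that new house being blocked; it is resistant to altruists if, for every empty lot, putting a house on it results in some other (already existing) house being blocked. An ES configuration is a maximal configuration resistant to both predators and altruists. *)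

From mathcomp Require Import all_boot.
Set Implicit Arguments. Unset Strict Implicit. Unset Printing Implicit Defensive.

(* An m x n configuration: C i j = true means lot (i,j) is occupied.
   Indices are 1-based: rows 1..m (1 = north), columns 1..n (1 = west).
   Values of C outside the grid are irrelevant (all notions below only
   consult lots inside the grid). *)
Definition config := nat -> nat -> bool.

Definition inside (m n i j : nat) : bool := (1 <= i <= m) && (1 <= j <= n).

Definition occ (m n : nat) (C : config) (i j : nat) : bool :=
  inside m n i j && C i j.

Definition blocked (m n : nat) (C : config) (i j : nat) : bool :=
  [&& occ m n C i j, (1 < j) && occ m n C i j.-1, occ m n C i j.+1
    & occ m n C i.+1 j].

Definition permissible (m n : nat) (C : config) : Prop :=
  forall i j, inside m n i j -> C i j -> ~~ blocked m n C i j.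

Definition add_house (C : config) (a b : nat) : config :=
  fun i j => if (i == a) && (j == b) then true else C i j.

Definition maximal (m n : nat) (C : config) : Prop :=
  permissible m n C /\
  forall a b, inside m n a b -> C a b = false ->
    ~ permissible m n (add_house C a b).

Definition resistant_predators (m n : nat) (C : config) : Prop :=
  forall a b, inside m n a b -> C a b = false ->
    blocked m n (add_house C a b) a b.

Definition resistant_altruists (m n : nat) (C : config) : Prop :=
  forall a b, inside m n a b -> C a b = false ->
    exists i j, [/\ inside m n i j, C i j, (i, j) <> (a, b) &
                    blocked m n (add_house C a b) i j].

Definition ES (m n : nat) (C : config) : Prop :=
  [/\ maximal m n C, resistant_predators m n C & resistant_altruists m n C].

From mathcomp Require Import all_boot zify.
Set Implicit Arguments. Unset Strict Implicit. Unset Printing Implicit Defensive.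

(* Every empty lot ("hole") of an ES configuration has houses to its left, its
   right and below it, and a new house there would block a neighbour.  Count
   the holes of row r among its first c lots.  A first prefix of a row with
   more than one hole per three lots ([3 * holes > c + 1]) ends in two holes at
   distance two; the houses that this forces above them leave a hole two rows
   up, and comparing hole counts row by row shows that the row two above
   violates the bound earlier.  Hence every row has [3 * holes <= c + 1]
   (row 1, which has no row above, is handled through row 2).  Row m is full,
   so row m-1 never has three consecutive houses, which gives a matching lower
   bound on its holes.  At the east end of row m-1 the two bounds and the rows
   above force a hole at column n-1, and by mirror symmetry at column 2; then
   the bounds determine the number of holes of every prefix of row m-1, which
   is the pattern 101 101 ... 101, and the hole at n-1 gives 3 | n. *)

(* [lia] case-splits on every boolean hypothesis, which is exponential in the
   number of occupancy facts in the context.  They never matter for the index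
   arithmetic, so [idx_lia] clears them first; counting facts ([leq] and [nat]
   equations) are kept. *)
Ltac clear_occupancy :=
  repeat match goal with
  | H : context [?c _ _] |- _ =>
      match type of c with config =>
        lazymatch type of H with
        | is_true (leq _ _) => fail
        | @eq nat _ _ => fail
        | _ => clear H
        end
      end
  end.

Ltac idx_lia := clear_occupancy; lia.

(* What permissibility and the two resistance properties say about single
   lots.  The disjuncts of [hole_altruist] say whether a house at the hole would
   block its west, east or north neighbour. *)
Record ES_local (m n : nat) (C : config) : Prop := {
  hole_surrounded : forall a b, C a b = false -> 0 < a <= m -> 0 < b <= n ->
    [/\ 1 < b < n, a < m, C a b.-1, C a b.+1 & C a.+1 b];
  enclosed_lot_empty : forall i j, C i j.-1 -> C i j.+1 -> C i.+1 j ->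
    0 < i < m -> 1 < j < n -> C i j = false;
  hole_altruist : forall a b, C a b = false -> 0 < a <= m -> 0 < b <= n ->
    [\/ [&& 2 < b, C a b.-2 & C a.+1 b.-1],
        [&& b.+2 <= n, C a b.+2 & C a.+1 b.+1] |
        [&& 1 < a, C a.-1 b.-1, C a.-1 b & C a.-1 b.+1]] }.

Section FromES.
Variables (m n : nat) (C : config).

Lemma add_house_other a b i j : (i, j) != (a, b) -> add_house C a b i j = C i j.
Proof. by rewrite /add_house xpair_eqE => /negPf ->. Qed.

Lemma add_house_at a b : add_house C a b a b.
Proof. by rewrite /add_house !eqxx. Qed.

Lemma hole_surrounded_of_predators : resistant_predators m n C ->
  forall a b, C a b = false -> 0 < a <= m -> 0 < b <= n ->
  [/\ 1 < b < n, a < m, C a b.-1, C a b.+1 & C a.+1 b].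
Proof.
move=> Hpred a b Eab Ha Hb.
have Hin : inside m n a b by rewrite /inside Ha Hb.
move: (Hpred a b Hin Eab).
rewrite /blocked /occ /inside add_house_at !add_house_other ?xpair_eqE; try lia.
case/and4P=> _ /and3P[Hb1 _ Cl] /andP[/andP[_ Hbn] Cr] /andP[/andP[Ham _] Cb].
by split; rewrite ?Hb1.
Qed.

Lemma enclosed_lot_empty_of_permissible : permissible m n C ->
  forall i j, C i j.-1 -> C i j.+1 -> C i.+1 j -> 0 < i < m -> 1 < j < n -> C i j = false.
Proof.
move=> Hperm i j Cl Cr Cb Hi Hj; apply/negbTE/negP => Cij.
have Hin : inside m n i j by rewrite /inside; lia.
move/negP: (Hperm i j Hin Cij); apply; rewrite /blocked /occ /inside Cij Cl Cr Cb !andbT.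
lia.
Qed.

Lemma hole_altruist_of_altruists : permissible m n C -> resistant_altruists m n C ->
  forall a b, C a b = false -> 0 < a <= m -> 0 < b <= n ->
  [\/ [&& 2 < b, C a b.-2 & C a.+1 b.-1],
      [&& b.+2 <= n, C a b.+2 & C a.+1 b.+1] |
      [&& 1 < a, C a.-1 b.-1, C a.-1 b & C a.-1 b.+1]].
Proof.
move=> Hperm Halt a b Eab Ha Hb.
have Hin : inside m n a b by rewrite /inside Ha Hb.
have [i [j [Hij Cij Hne Hbl]]] := Halt a b Hin Eab.
have Hnb := Hperm i j Hij Cij.
have /andP[Hi Hjb] := Hij.
(* (i, j) is not blocked in [C], so the new house is one of its neighbours. *)
have Hnew : [|| (i, j.-1) == (a, b), (i, j.+1) == (a, b) | (i.+1, j) == (a, b)].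
  apply: contraNT Hnb => /norP[N1 /norP[N2 N3]].
  have N0 : (i, j) != (a, b) by apply/eqP.
  move: Hbl; rewrite /blocked /occ.
  by rewrite !(add_house_other N0, add_house_other N1, add_house_other N2, add_house_other N3).
move: Hbl; case/or3P: Hnew => /eqP[<- <-];
  rewrite /blocked /occ /inside add_house_at !add_house_other ?xpair_eqE; try lia;
  case/and4P=> _ /and3P[Hj _ Cl] /andP[/andP[_ Hjn] Cr] /andP[/andP[Him _] Cb].
- by apply: Or32; rewrite prednK ?Cr ?Cb ?andbT; lia.
- by apply: Or31; rewrite Cl Cb andbT; lia.
- by apply: Or33; rewrite Cl Cij Cr; lia.
Qed.

End FromES.

Lemma ES_local_of_ES m n C : ES m n C -> ES_local m n C.
Proof.
case=> [[Hperm _] Hpred Halt]; split.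
- exact: hole_surrounded_of_predators.
- exact: enclosed_lot_empty_of_permissible.
- exact: hole_altruist_of_altruists.
Qed.

Definition mirror (n : nat) (C : config) : config := fun i j => C i (n.+1 - j).

Lemma ES_local_mirror m n C : ES_local m n C -> ES_local m n (mirror n C).
Proof.
case=> Hhole Hencl Halt; rewrite /mirror; split.
- move=> a b E Ha Hb.
  have [|Hb' Ha' Cr Cl Cb] := Hhole a (n.+1 - b) E Ha; [lia|].
  have -> : n.+1 - b.-1 = (n.+1 - b).+1 by lia.
  have -> : n.+1 - b.+1 = (n.+1 - b).-1 by lia.
  by split=> //; lia.
- move=> i j Cl Cr Cb Hi Hj.
  apply: Hencl => //; last lia.
  + by have <- : n.+1 - j.+1 = (n.+1 - j).-1 by lia.
  + by have <- : n.+1 - j.-1 = (n.+1 - j).+1 by lia.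
- move=> a b E Ha Hb.
  have -> : n.+1 - b.-1 = (n.+1 - b).+1 by lia.
  have -> : n.+1 - b.+1 = (n.+1 - b).-1 by lia.
  have -> : n.+1 - b.+2 = (n.+1 - b).-2 by lia.
  case: (Halt a (n.+1 - b) E Ha) => [|/and3P[H1 H2 H3]|/and3P[H1 H2 H3]|H]; [lia|..].
  + by apply: Or32; rewrite H2 H3 andbT; lia.
  + apply: Or31; have -> : n.+1 - b.-2 = (n.+1 - b).+2 by lia.
    by rewrite H2 H3 andbT; lia.
  + by apply: Or33; case/and4P: H => -> -> -> ->.
Qed.

Definition holes (C : config) (r c : nat) : nat := count (fun j => ~~ C r j) (iota 1 c).

Section Holes.
Variables (C : config) (r : nat).

Lemma holesS c : holes C r c.+1 = holes C r c + ~~ C r c.+1.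
Proof. by rewrite /holes -[c.+1]addn1 iotaD count_cat /= addn0 add1n addn1. Qed.

Lemma holesS_house c : C r c.+1 -> holes C r c.+1 = holes C r c.
Proof. by move=> H; rewrite holesS H addn0. Qed.

Lemma holesS_hole c : C r c.+1 = false -> holes C r c.+1 = (holes C r c).+1.
Proof. by move=> H; rewrite holesS H addn1. Qed.

Lemma holes_mono : {homo holes C r : a b / a <= b}.
Proof.
move=> a b /subnK <-; elim: (b - a) => [|d IH] //.
by rewrite addSn holesS; lia.
Qed.

Lemma holes_full c : (forall j, 0 < j <= c -> C r j) -> holes C r c = 0.
Proof.
elim: c => [//|c IH] Hfull.
rewrite holesS_house ?IH ?Hfull //; last lia.
by move=> j Hj; apply: Hfull; lia.
Qed.

Lemma house_of_holes_eq a b j : a < j <= b -> holes C r a = holes C r b -> C r j.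
Proof.
case: j => [|j] Hj Heq; first lia.
have := holes_mono (_ : a <= j); have := holes_mono (_ : j.+1 <= b).
by rewrite holesS; case: (C r j.+1) => //=; lia.
Qed.

Lemma last_hole c : (forall j, 0 < j <= c -> C r j) \/
  exists2 p, 0 < p <= c & C r p = false /\ holes C r p = holes C r c.
Proof.
elim: c => [|c [Hfull|[p Hp [Ep Hpc]]]]; first by left; lia.
- case Ec: (C r c.+1); last by right; exists c.+1; [lia | split].
  left=> j Hj; case: (ltngtP j c.+1) => [Hlt|Hgt|->] //; last lia.
  by apply: Hfull; lia.
- case Ec: (C r c.+1); last by right; exists c.+1; [lia | split].
  by right; exists p; [lia | rewrite holesS_house].
Qed.

Lemma holes_window_lb n a b :
  (forall j, a < j -> j.+2 <= n -> ~~ [&& C r j, C r j.+1 & C r j.+2]) ->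
  a <= b <= n -> b + 3 * holes C r a <= a + 3 * holes C r b + 2.
Proof.
move=> Hwin; elim/ltn_ind: b => b IH Hb.
have Hmono := @holes_mono a b.
case: (leqP b a.+2) => Hba; first lia.
have [d Ed] : exists d, b = d.+3 by exists (b - 3); lia.
subst b.
have IHd : d + 3 * holes C r a <= a + 3 * holes C r d + 2 by apply: IH; lia.
have : ~~ [&& C r d.+1, C r d.+2 & C r d.+3] by apply: Hwin; lia.
by rewrite !holesS; case: (C r d.+1); case: (C r d.+2); case: (C r d.+3) => /=; lia.
Qed.

End Holes.

(* The row 101 101 ... 101 attains the bound. *)
Definition sparse (n : nat) (C : config) (r : nat) : Prop :=
  forall c, c <= n -> 3 * holes C r c <= c.+1.

Section LocalRules.
Variables (m n : nat) (C : config).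
Hypothesis HC : ES_local m n C.

Lemma house_first_col a : 0 < a <= m -> 0 < n -> C a 1.
Proof.
move=> Ha Hn; case E: (C a 1) => //.
by have [|Hb _ _ _ _] := hole_surrounded HC E Ha; idx_lia.
Qed.

Lemma house_last_col a : 0 < a <= m -> 0 < n -> C a n.
Proof.
move=> Ha Hn; case E: (C a n) => //.
by have [|Hb _ _ _ _] := hole_surrounded HC E Ha; idx_lia.
Qed.

Lemma house_last_row b : 0 < m -> 0 < b <= n -> C m b.
Proof.
move=> Hm Hb; case E: (C m b) => //.
by have [|_ Ha _ _ _] := hole_surrounded HC E _ Hb; idx_lia.
Qed.

Lemma house_above_hole a b : C a.+1 b = false -> 0 < a < m -> 0 < b <= n -> C a b.
Proof.
move=> E Ha Hb; case E': (C a b) => //.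
by have [|_ _ _ _ Cb] := hole_surrounded HC E' _ Hb; [idx_lia | rewrite Cb in E].
Qed.

Lemma hole_left_of i j : C i j -> C i j.+1 -> C i.+1 j -> 0 < i < m -> 1 < j < n ->
  C i j.-1 = false.
Proof.
move=> Cij Cr Cb Hi Hj; apply/negbTE/negP => Cl.
by rewrite (enclosed_lot_empty HC Cl Cr Cb) in Cij.
Qed.

Lemma hole_under i j : C i j -> C i j.-1 -> C i j.+1 -> 0 < i < m -> 1 < j < n ->
  C i.+1 j = false.
Proof.
move=> Cij Cl Cr Hi Hj; apply/negbTE/negP => Cb.
by rewrite (enclosed_lot_empty HC Cl Cr Cb) in Cij.
Qed.

Lemma hole_diag_up i b : C i b = false -> C i.+1 b.-1 = false ->
    ~~ [&& b.+2 <= n, C i b.+2 & C i.+1 b.+1] -> 0 < i < m -> 1 < b <= n ->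
  1 < i /\ C i.-1 b.-2 = false.
Proof.
move=> Eib Ebelow Nright Hi Hb.
have [||Hb1 _ _ _ _] := hole_surrounded HC Ebelow; [idx_lia..|].
have [||/and3P[_ _]|Hright|/and4P[Hi1 Cl Cm Cr]] := hole_altruist HC Eib;
  [idx_lia | idx_lia | by rewrite Ebelow | by rewrite Hright in Nright |].
have Ci : C i b.-1 by apply: (house_above_hole Ebelow); idx_lia.
have Eb : b.-1.+1 = b by idx_lia.
have Ei : i.-1.+1 = i by idx_lia.
by split=> //; apply: hole_left_of; rewrite ?Eb ?Ei //; idx_lia.
Qed.

Lemma holes_above_hole_pair i c : C i.+1 c = false -> C i.+1 c.+2 = false ->
    0 < i < m -> 0 < c -> c.+2 <= n ->
  [/\ 1 < i, C i c.+1 = false & C i.-1 c.-1 = false].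
Proof.
move=> E0 E2 Hi Hc Hcn.
have [||_ _ _ C1 _] := hole_surrounded HC E0; [idx_lia..|].
have [||Hc2 _ _ _ _] := hole_surrounded HC E2; [idx_lia..|].
have Cl : C i c by apply: (house_above_hole E0); idx_lia.
have Cr : C i c.+2 by apply: (house_above_hole E2); idx_lia.
have E1 : C i c.+1 = false by apply: (enclosed_lot_empty HC) => //; idx_lia.
have [] := hole_diag_up E1 E0 _ Hi _; [by rewrite E2 !andbF | idx_lia | by []].
Qed.

(* The bounds improve by one unless row i+1 has a hole in column 2. *)
Lemma holes_below_bounds i : 0 < i < m -> forall c, 0 < c <= n ->
  (C i c = false -> holes C i.+1 c + C i.+1 2 <= holes C i c) /\
  (C i.+1 c = false -> holes C i.+1 c + C i.+1 2 <= (holes C i c).+1).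
Proof.
move=> Hi; elim/ltn_ind => c IH Hc; split=> E.
- have [||_ _ _ _ Cb] := hole_surrounded HC E; [idx_lia..|].
  have [d Ed] : exists d, c = d.+1 by exists c.-1; idx_lia.
  subst c; rewrite (holesS_hole E) (holesS_house Cb).
  have [Hfull|[p Hp [Ep <-]]] := last_hole C i.+1 d.
    by rewrite holes_full //; case: (C i.+1 2).
  have [||_ /(_ Ep) IHp] := IH p _ _; [idx_lia..|].
  by have := @holes_mono C i p d _; idx_lia.
- have [||Hc2 _ Cl _ _] := hole_surrounded HC E; [idx_lia..|].
  have Ci : C i c by apply: (house_above_hole E); idx_lia.
  have [d Ed] : exists d, c = d.+2 by exists c.-2; idx_lia.
  subst c; rewrite (holesS_hole E) (holesS_house Cl).
  case: d => [|d] in IH Hc Hc2 E Cl Ci *; first by rewrite E.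
  case Cm: (C i d.+2).
  + have Ed : C i d.+1 = false by apply: (@hole_left_of i d.+2) => //; idx_lia.
    have [||/(_ Ed) IHd _] := IH d.+1 _ _; [idx_lia..|].
    by have := @holes_mono C i d.+1 d.+3 _; idx_lia.
  + have [||/(_ Cm) IHd _] := IH d.+2 _ _; [idx_lia..|].
    by rewrite (holesS_house Ci); rewrite (holesS_house Cl) in IHd; idx_lia.
Qed.

Lemma holes_below_hole i c : C i c = false -> 0 < i < m -> 0 < c <= n ->
  holes C i.+1 c + C i.+1 2 <= holes C i c.
Proof. by move=> E Hi Hc; apply: (holes_below_bounds Hi Hc).1. Qed.

Lemma no_stacked_holes i j : 0 < i < m -> 0 < j <= n -> 0 < C i j + C i.+1 j.
Proof.
move=> Hi Hj; case E: (C i.+1 j); first by rewrite addn1.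
by rewrite (house_above_hole E).
Qed.

Lemma sparse_prefix r c : 0 < r <= m -> c <= 3 -> c <= n -> 3 * holes C r c <= c.+1.
Proof.
move=> Hr Hc3 Hcn; case: c => [//|c] in Hc3 Hcn *.
have C1 : C r 1 by apply: house_first_col; idx_lia.
case: c => [|[|[|//]]] in Hc3 Hcn *; rewrite /holes /= C1 //.
- by case: (C r 2).
- case E3: (C r 3); first by case: (C r 2).
  by have [||_ _ -> _ _] := hole_surrounded HC E3; [idx_lia..|].
Qed.

Lemma sparse_violation r c : 0 < r <= m -> c <= n ->
    (forall d, d < c -> 3 * holes C r d <= d.+1) -> c.+1 < 3 * holes C r c ->
  exists d, [/\ c = d.+4, C r d.+2 = false, C r d.+4 = false & 3 * holes C r d.+4 = d + 6].
Proof.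
move=> Hr Hcn Hbelow Hviol.
have [Hc3|Hc4] := leqP c 3; first by have := sparse_prefix Hr Hc3 Hcn; idx_lia.
have [d Ed] : exists d, c = d.+4 by exists (c - 4); idx_lia.
subst c; exists d.
have B3 := Hbelow d.+3 (ltnSn _).
have B2 : 3 * holes C r d.+2 <= d.+3 by apply: Hbelow; idx_lia.
have B1 : 3 * holes C r d.+1 <= d.+2 by apply: Hbelow; idx_lia.
case E4: (C r d.+4); first by rewrite (holesS_house E4) in Hviol; idx_lia.
have [||_ _ C3 _ _] := hole_surrounded HC E4; [idx_lia..|].
rewrite (holesS_hole E4) (holesS_house C3) in Hviol *.
case E2: (C r d.+2); first by rewrite (holesS_house E2) in Hviol; idx_lia.
by split=> //; idx_lia.
Qed.

Lemma sparse_succ i : 0 < i < m -> (1 < i -> sparse n C i.-1) -> sparse n C i.+1.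
Proof.
move=> Hi Hprev; elim/ltn_ind => c IH Hcn; rewrite leqNgt; apply/negP => Hviol.
have Hbelow d : d < c -> 3 * holes C i.+1 d <= d.+1.
  by move=> Hd; apply: IH; idx_lia.
have [|d [Ec E2 E4 Hcount]] := sparse_violation _ Hcn Hbelow Hviol; [idx_lia|].
have [||Hi1 E3 E1] := holes_above_hole_pair E2 E4 Hi; [idx_lia..|].
have Ei : i.-1.+1 = i by idx_lia.
have L1 : holes C i.+1 d.+3 + C i.+1 2 <= holes C i d.+3.
  by apply: (holes_below_hole E3); idx_lia.
have L2 : holes C i d.+1 + C i 2 <= holes C i.-1 d.+1.
  by rewrite -{1 2}Ei; apply: (holes_below_hole E1); idx_lia.
have S : 3 * holes C i.-1 d.+1 <= d.+2 by apply: Hprev; idx_lia.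
have C2 : C i d.+2 by apply: (house_above_hole E2); idx_lia.
have Col2 : 0 < C i 2 + C i.+1 2 by apply: no_stacked_holes; idx_lia.
move: Hcount L1; rewrite (holesS_hole E4) (holesS_hole E3) (holesS_house C2).
idx_lia.
Qed.

(* Row 1 has no row above it, so a new house at one of its holes must block a
   west or east neighbour; its holes are bounded through row 2 instead. *)
Lemma house_row2_col3 : 2 < m -> 2 < n -> C 2 3.
Proof.
move=> Hm Hn; case E3: (C 2 3) => //.
have [||_ _ C22 _ _] := hole_surrounded HC E3; [idx_lia..|].
have C11 : C 1 1 by apply: house_first_col; idx_lia.
have C13 : C 1 3 by apply: (house_above_hole E3); idx_lia.
have E12 : C 1 2 = false by apply: (enclosed_lot_empty HC) => //; idx_lia.
by have [||/and3P[]|/and3P[_ _]|/and4P[]] := hole_altruist HC E12;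
  [idx_lia | idx_lia | by [] | by rewrite E3 | by []].
Qed.

Lemma row1_holes_separated q p : C 1 q = false -> C 1 p = false -> 0 < q < p -> p <= n ->
  2 < m -> holes C 2 q < holes C 2 p.
Proof.
move=> Eq Ep Hqp Hpn Hm.
have Hle : holes C 2 q <= holes C 2 p by apply: holes_mono; idx_lia.
rewrite ltn_neqAle Hle andbT; apply/eqP => Heq.
have [||Hq _ _ C1r C2q] := hole_surrounded HC Eq; [idx_lia..|].
have Row2 j : q < j <= p -> C 2 j by move=> Hj; apply: house_of_holes_eq Heq.
have Hq1 : q.+1 != p by apply: contraTneq C1r => ->; rewrite Ep.
have C21 : C 2 q.+1 by apply: Row2; idx_lia.
have C22 : C 2 q.+2 by apply: Row2; idx_lia.
have E31 : C 3 q.+1 = false by apply: (hole_under C21 C2q C22); idx_lia.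
have [||_ _ C3q C32 _] := hole_surrounded HC E31; [idx_lia..|].
have Hp : p = q.+2.
  case: (ltngtP p q.+2) => // [|Hlt]; first idx_lia.
  have C23 : C 2 q.+3 by apply: Row2; idx_lia.
  have E22 : C 2 q.+2 = false by apply: (enclosed_lot_empty HC) => //; idx_lia.
  by rewrite E22 in C22.
have E2l : C 2 q.-1 = false by apply: (hole_left_of C2q C21 C3q); idx_lia.
by have [||/and3P[_ _]|/and3P[_]|/and4P[]] := hole_altruist HC Eq;
  [idx_lia | idx_lia | by rewrite E2l | by rewrite -Hp Ep | by []].
Qed.

Lemma holes_row1_le p : C 1 p = false -> 0 < p <= n -> 2 < m ->
  holes C 1 p + ~~ C 2 2 <= (holes C 2 p).+1.
Proof.
move=> + + Hm; elim/ltn_ind: p => p IH Ep Hp.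
have [||Hp2 _ _ _ _] := hole_surrounded HC Ep; [idx_lia..|].
have [d Ed] : exists d, p = d.+1 by exists p.-1; idx_lia.
subst p; rewrite (holesS_hole Ep).
have [Hfull|[q Hq [Eq <-]]] := last_hole C 1 d.
  rewrite holes_full //; case E22: (C 2 2) => //=.
  have C21 : C 2 1 by apply: house_first_col; idx_lia.
  have := @holes_mono C 2 2 d.+1; rewrite (holesS_hole E22) (holesS_house C21).
  by idx_lia.
have Hsep : holes C 2 q < holes C 2 d.+1 by apply: (row1_holes_separated Eq Ep); idx_lia.
have IHq : holes C 1 q + ~~ C 2 2 <= (holes C 2 q).+1 by apply: IH => //; idx_lia.
by idx_lia.
Qed.

Lemma holes_row2_le c : C 2 2 -> 2 < m -> 2 < n -> c <= n -> 3 * holes C 2 c <= c.-1.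
Proof.
move=> C22 Hm Hn; elim/ltn_ind: c => c IH Hcn.
have C21 : C 2 1 by apply: house_first_col; idx_lia.
have C23 := house_row2_col3 Hm Hn.
have [Hc3|Hc4] := leqP c 3.
  rewrite holes_full ?muln0 // => j Hj.
  by have [->|[->|->]] : j = 1 \/ j = 2 \/ j = 3 by idx_lia.
have [d Ed] : exists d, c = d.+4 by exists (c - 4); idx_lia.
subst c; case E4: (C 2 d.+4).
  by rewrite (holesS_house E4); have := IH d.+3 _ _; idx_lia.
have [||_ _ C3 _ _] := hole_surrounded HC E4; [idx_lia..|].
have C2 : C 2 d.+2.
  case E2: (C 2 d.+2) => //.
  by have [|||Hi1] := @holes_above_hole_pair 1 d.+2 E2 E4; idx_lia.
rewrite (holesS_hole E4) (holesS_house C3) (holesS_house C2).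
by have := IH d.+1 _ _; idx_lia.
Qed.

Lemma hole_below_row1_pair c : C 1 c = false -> C 1 c.+2 = false -> 0 < c -> c.+2 <= n ->
  2 < m -> C 2 c.+1 = false.
Proof.
move=> E0 E2 Hc0 Hcn Hm; case C21: (C 2 c.+1) => //.
have [||Hc _ _ _ C20] := hole_surrounded HC E0; [idx_lia..|].
have [||_ _ _ _ C22] := hole_surrounded HC E2; [idx_lia..|].
have C2l : C 2 c.-1.
  have [||/and3P[_ _ //]|/and3P[_ C12 _]|/and4P[]] := hole_altruist HC E0;
    [idx_lia | idx_lia | by rewrite E2 in C12 | by []].
have E30 : C 3 c = false by apply: (hole_under C20 C2l C21); idx_lia.
have E31 : C 3 c.+1 = false by apply: (hole_under C21 C20 C22); idx_lia.
have [||_ _ _ C31 _] := hole_surrounded HC E30; [idx_lia..|].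
by rewrite C31 in E31.
Qed.

Lemma sparse_row1 : 2 < m -> 2 < n -> sparse n C 1.
Proof.
move=> Hm Hn; have S2 : sparse n C 2 by apply: (@sparse_succ 1) => //; idx_lia.
elim/ltn_ind => c IH Hcn; rewrite leqNgt; apply/negP => Hviol.
have Hbelow d : d < c -> 3 * holes C 1 d <= d.+1.
  by move=> Hd; apply: IH; idx_lia.
have [|d [Ec E2 E4 Hcount]] := sparse_violation _ Hcn Hbelow Hviol; [idx_lia|].
have [||_ _ C3 _ _] := hole_surrounded HC E4; [idx_lia..|].
have E23 : C 2 d.+3 = false by apply: (hole_below_row1_pair E2 E4); idx_lia.
have L : holes C 1 d.+2 + ~~ C 2 2 <= (holes C 2 d.+2).+1.
  by apply: (holes_row1_le E2); idx_lia.
have S : 3 * holes C 2 d.+3 <= d.+4 by apply: S2; idx_lia.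
have U : C 2 2 -> 3 * holes C 2 d.+3 <= d.+2.
  by move=> C22; apply: (holes_row2_le C22); idx_lia.
rewrite (holesS_hole E4) (holesS_house C3) in Hcount.
rewrite (holesS_hole E23) in S U.
by case: (C 2 2) in L U *; idx_lia.
Qed.

Lemma sparse_rows : 2 < m -> 2 < n -> forall r, 0 < r <= m -> sparse n C r.
Proof.
move=> Hm Hn; elim/ltn_ind => -[|[|r]] IH Hr //; first exact: sparse_row1.
by apply: sparse_succ => [|Hr1]; [idx_lia | apply: IH; idx_lia].
Qed.

Lemma no_three_houses_above_last_row j : 1 < m -> 0 < j -> j.+2 <= n ->
  ~~ [&& C m.-1 j, C m.-1 j.+1 & C m.-1 j.+2].
Proof.
move=> Hm Hj Hjn; apply/and3P => -[Cl Cm Cr].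
have Em : m.-1.+1 = m by idx_lia.
have Cb : C m.-1.+1 j.+1 by rewrite Em; apply: house_last_row; idx_lia.
have Em1 : C m.-1 j.+1 = false by apply: (enclosed_lot_empty HC) => //; idx_lia.
by rewrite Em1 in Cm.
Qed.

Lemma holes_above_last_row_lb c : 2 < m -> c <= n ->
  c <= 3 * holes C m.-1 c + 1 + C m.-1 2.
Proof.
move=> Hm Hcn.
have Hwin a j : a < j -> j.+2 <= n -> ~~ [&& C m.-1 j, C m.-1 j.+1 & C m.-1 j.+2].
  by move=> Hj Hjn; apply: no_three_houses_above_last_row; idx_lia.
case E2: (C m.-1 2).
  by have := @holes_window_lb C m.-1 n 0 c (Hwin 0); idx_lia.
have [Hc1|Hc2] := leqP c 1; first idx_lia.
have C1 : C m.-1 1 by apply: house_first_col; idx_lia.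
have := @holes_window_lb C m.-1 n 2 c (Hwin 2).
by rewrite (holesS_hole E2) (holesS_house C1); idx_lia.
Qed.

(* If (m-1, n-1) held a house, then (m-1, n-2) and (m-2, n-1) would be holes,
   the altruist rule at the latter would put a hole at (m-3, n-3), and the hole
   counts of rows m-1, m-2, m-3 up to these columns would violate the bounds. *)
Lemma hole_near_corner : 2 < m -> 2 < n -> C m.-1 n.-1 = false.
Proof.
move=> Hm Hn; have Hsparse := sparse_rows Hm Hn.
have [y Ey] : exists y, m = y.+3 by exists (m - 3); idx_lia.
have [k Ek] : exists k, n = k.+3 by exists (n - 3); idx_lia.
rewrite Ey Ek /=; case Ex: (C y.+2 k.+2) => //.
have Cxn : C y.+2 k.+3 by rewrite -Ek; apply: house_last_col; idx_lia.
have Cmk : C y.+3 k.+2 by rewrite -Ey; apply: house_last_row; idx_lia.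
have Ex1 : C y.+2 k.+1 = false by apply: (hole_left_of Ex Cxn Cmk); idx_lia.
have [||Hk _ _ _ _] := hole_surrounded HC Ex1; [idx_lia..|].
have Cy1 : C y.+1 k.+1 by apply: (house_above_hole Ex1); idx_lia.
have Cyn : C y.+1 k.+3 by rewrite -Ek; apply: house_last_col; idx_lia.
have Ey2 : C y.+1 k.+2 = false by apply: (enclosed_lot_empty HC) => //; idx_lia.
have [Hy Ez] : 1 < y.+1 /\ C y k = false.
  by apply: (hole_diag_up Ey2 Ex1); [rewrite Ek ltnn | idx_lia..].
have L1 : holes C y.+2 k.+2 + C y.+2 2 <= holes C y.+1 k.+2.
  by apply: (holes_below_hole Ey2); idx_lia.
have L2 : holes C y.+1 k + C y.+1 2 <= holes C y k.
  by apply: (holes_below_hole Ez); idx_lia.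
have S1 : 3 * holes C y.+1 k.+2 <= k.+3 by apply: Hsparse; idx_lia.
have S0 : 3 * holes C y k <= k.+1 by apply: Hsparse; idx_lia.
have LB : k.+3 <= 3 * holes C y.+2 k.+3 + 1 + C y.+2 2.
  by have := holes_above_last_row_lb Hm (leqnn n); rewrite Ey Ek.
have Col2 : 0 < C y.+1 2 + C y.+2 2 by apply: no_stacked_holes; idx_lia.
rewrite (holesS_house Cxn) in LB; rewrite (holesS_hole Ey2) (holesS_house Cy1) in L1 S1.
by idx_lia.
Qed.

Lemma holes_above_last_row c : 2 < m -> 2 < n -> C m.-1 2 = false -> c <= n ->
  holes C m.-1 c = c.+1 %/ 3.
Proof.
move=> Hm Hn E2 Hcn.
have := holes_above_last_row_lb Hm Hcn; rewrite E2.
have : 3 * holes C m.-1 c <= c.+1 by apply: sparse_rows => //; idx_lia.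
by idx_lia.
Qed.

Lemma above_last_rowE c : 2 < m -> 2 < n -> C m.-1 2 = false -> 0 < c <= n ->
  C m.-1 c = (c %% 3 != 2).
Proof.
move=> Hm Hn E2 Hc.
have Ec : c.-1.+1 = c by idx_lia.
by have := holesS C m.-1 c.-1; rewrite Ec !holes_above_last_row //; idx_lia.
Qed.

End LocalRules.

Theorem mainTheorem13 (m n : nat) (C : config) :
  2 < m -> 2 < n -> ES m n C ->
  [/\ 3 %| n,
      (forall j, 1 <= j <= n -> C m j = true) &
      (forall j, 1 <= j <= n -> C m.-1 j = (j %% 3 != 2))].
Proof.
move=> Hm Hn HES.
have HC := ES_local_of_ES HES.
have Hright : C m.-1 n.-1 = false := hole_near_corner HC Hm Hn.
have Hleft : C m.-1 2 = false.
  have := hole_near_corner (ES_local_mirror HC) Hm Hn.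
  by rewrite /mirror (_ : n.+1 - n.-1 = 2) //; lia.
have Hrow := above_last_rowE HC Hm Hn Hleft.
split.
- by have := Hrow n.-1; rewrite Hright; lia.
- by move=> j Hj; apply: (house_last_row HC); lia.
- by move=> j Hj; apply: Hrow.
Qed.
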